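(* If $X$ is a set star Hurewicz space and $Y$ is a compact space, then $X \times Y$ is rectangular set star Hurewicz.
   Context: For a subset $A$ of a space $Z$ and a collection $\mathcal{U}$ of subsets of $Z$, ${\rm St}(A,\mathcal{U}) = \bigcup\{U \in \mathcal{U}: U \cap A \neq \emptyset\}$. A space $X$ is set star Hurewicz if for each nonempty $A \subset X$ and each sequence $(\mathcal{U}_n: n\in\mathbb{N})$ of collections of sets open in $X$ with $\overline{A} \subset \bigcup\mathcal{U}_n$ for all $n$, there are finite $\mathcal{V}_n \subset \mathcal{U}_n$ such that each $x \in A$ lies in ${\rm St}(\bigcup\mathcal{V}_n,\mathcal{U}_n)$ for all but finitely many $n$. The product $X\times Y$ is rectangular set star Hurewicz if for each nonempty set of the form $A \times B \subset X \times Y$ and each sequence $(\mathcal{U}_n: n\in\mathbb{N})$ of collections of sets open in $X\times Y$ with $\overline{A\times B} \subset \bigcup\mathcal{U}_n$ for all $n$, there are finite $\mathcal{V}_n \subset \mathcal{U}_n$ such that each $z \in A \times B$ lies in ${\rm St}(\bigcup\mathcal{V}_n,\mathcal{U}_n)$ for all but finitely many $n$. *)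

From mathcomp Require Import all_boot all_order.
From mathcomp Require Import all_classical all_reals all_analysis.
Set Implicit Arguments. Unset Strict Implicit. Unset Printing Implicit Defensive.
Local Open Scope classical_set_scope.

Definition St (T : Type) (A : set T) (U : set (set T)) : set T :=
  \bigcup_(W in [set W | U W /\ W `&` A !=set0]) W.

Definition SSH_condition (Z : topologicalType) (A : set Z) : Prop :=
  forall U : nat -> set (set Z),
    (forall n, U n `<=` open) ->
    (forall n, closure A `<=` \bigcup_(W in U n) W) ->
    exists V : nat -> set (set Z),
      (forall n, finite_set (V n) /\ V n `<=` U n) /\
      (forall x, A x -> exists N : nat, forall n : nat, (N <= n)%N ->
          St (\bigcup_(W in V n) W) (U n) x).

Definition set_star_Hurewicz (X : topologicalType) : Prop :=
  forall A : set X, A !=set0 -> SSH_condition A.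

Definition rectangular_set_star_Hurewicz (X Y : topologicalType) : Prop :=
  forall (A : set X) (B : set Y), A `*` B !=set0 -> SSH_condition (A `*` B).

From HB Require Import structures.
From mathcomp Require Import all_boot all_order finmap.
From mathcomp Require Import all_classical all_reals all_analysis.
Set Implicit Arguments.
Unset Strict Implicit.
Unset Printing Implicit Defensive.
Local Open Scope classical_set_scope.

(* Proof idea (a uniform version of the tube lemma).  Let (U_n) be open covers
   of cl(A x B), which contains cl A x cl B.  Since cl B is compact, for every n and every
   x in cl A there are an open Q_n(x) containing x and a finite F_n(x) in U_n
   such that, for each y in cl B, the "fibre" Q_n(x) x {y} lies inside a single
   member of F_n(x).  The sets Q_n(x), x in cl A, are open covers of cl A, so
   the set star Hurewicz property of X yields finite selections, which we
   realise as Q_n @` E_n for finite sets E_n of cl A.  Then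
   V_n = U_(x in E_n) F_n(x) works: if a lies in the star of Q_n @` E_n through
   some Q_n(y) meeting Q_n(x) at p, with x in E_n, the member of F_n(y) that
   contains Q_n(y) x {b} contains (a, b) and meets, at (p, b), the member of
   F_n(x) containing Q_n(x) x {b}. *)

Section PointedCopy.
Variables (T : topologicalType) (t0 : T).

(* T pointed at t0: the library proves the open-cover characterisation of
   compactness only for pointed spaces. *)
Definition pointed_at : Type := T.
HB.instance Definition _ := Topological.copy pointed_at T.
HB.instance Definition _ := isPointed.Build pointed_at t0.

Lemma compact_cover_at (K : set T) : compact K -> cover_compact K.
Proof. by move=> cK; have : @compact pointed_at K by []; rewrite compact_cover. Qed.

End PointedCopy.

Lemma compact_cover_compact (T : topologicalType) (K : set T) :
  compact K -> cover_compact K.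
Proof.
have [->|/set0P [t0 _]] := eqVneq K set0; last exact: compact_cover_at.
by move=> _ I D f _ _; exists fset0.
Qed.

Lemma open_rectangle (X Y : topologicalType) (W : set (X * Y)) x y :
  open W -> W (x, y) ->
  exists G H, [/\ open G, open H, G x, H y & G `*` H `<=` W].
Proof.
move=> oW Wxy; have : nbhs (x, y) W by apply: open_nbhs_nbhs.
case=> -[Q R] /= [+ +] QRW.
rewrite !nbhsE => -[G [oG Gx] GQ] [H [oH Hy] HR].
by exists G, H; split => // -[p q] [/= /GQ Qp /HR Rq]; apply: QRW.
Qed.

Lemma closure_setX (X Y : topologicalType) (A : set X) (B : set Y) :
  closure A `*` closure B `<=` closure (A `*` B).
Proof.
move=> [x y] [/= clAx clBy] W [[Q R] /= [xQ yR] QRW].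
have [a [Aa Qa]] := clAx _ xQ; have [b [Bb Rb]] := clBy _ yR.
by exists (a, b); split => //; apply: QRW.
Qed.

Lemma uniform_tube (X Y : topologicalType) (U : set (set (X * Y)))
    (K : set Y) (x : X) :
  U `<=` open -> compact K -> (forall y, K y -> (\bigcup_(W in U) W) (x, y)) ->
  exists Q F, [/\ open Q, Q x, finite_set F, F `<=` U &
    forall y, K y -> exists2 W, F W & forall p, Q p -> W (p, y)].
Proof.
move=> Uop cK cover.
have /choice [t ht] : forall y, exists t : set (X * Y) * set X * set Y, K y ->
    [/\ U t.1.1, open t.1.2, open t.2, t.1.2 x /\ t.2 y & t.1.2 `*` t.2 `<=` t.1.1].
  move=> y; have [Ky|nKy] := pselect (K y); last by exists (setT, setT, setT) => /nKy.
  have [W UW Wxy] := cover y Ky.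
  have [G [H [oG oH Gx Hy GHW]]] := open_rectangle (Uop _ UW) Wxy.
  by exists (W, G, H).
have [D DK KD] : finite_subset_cover K (fun y => (t y).2) K.
  apply: compact_cover_compact => // [y /ht[]//|y Ky].
  by exists y => //; have [_ _ _ []] := ht y Ky.
have : nbhs x (\bigcap_(y in [set` D]) (t y).1.2).
  apply: filter_bigI => y /DK /set_mem /ht [_ oG _ [Gx _] _].
  exact: open_nbhs_nbhs.
rewrite nbhsE => -[Q [oQ Qx] QG].
exists Q, ((fun y => (t y).1.1) @` [set` D]); split => //.
- exact/finite_image/finite_fset.
- by move=> _ [y /DK /set_mem /ht [] ? _ _ _ _ <-].
- move=> y Ky; have [z Dz Hz] := KD _ Ky.
  have [_ _ _ _ GHW] := ht z (set_mem (DK _ Dz)).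
  by exists (t z).1.1 => [|p Qp]; [exists z|apply: GHW; split => //; apply: QG Dz].
Qed.

Lemma finite_subset_image (S T : Type) (f : S -> T) (D : set S) (V : set T) :
  finite_set V -> V `<=` f @` D ->
  exists E, [/\ finite_set E, E `<=` D & V `<=` f @` E].
Proof.
have [->|/set0P [G0 VG0]] := eqVneq V set0.
  by move=> _ _; exists set0; split.
move=> finV VfD; have [x0 _ _] := VfD _ VG0.
have /choice [g hg] : forall G, exists x, V G -> D x /\ f x = G.
  move=> G; have [/VfD [x Dx fxG]|nVG] := pselect (V G); last by exists x0 => /nVG.
  by exists x.
exists (g @` V); split; first exact: finite_image.
- by move=> _ [G /hg [Dx _] <-].
- by move=> G VG; exists (g G); [exists G|case: (hg G VG)].
Qed.

Section StarTransfer.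
Variables (X Y : Type) (U : set (set (X * Y))) (C : set X) (K : set Y).
Variables (Q : X -> set X) (F : X -> set (set (X * Y))).
Hypothesis FU : forall x, C x -> F x `<=` U.
Hypothesis tubeF :
  forall x, C x -> forall y, K y -> exists2 W, F x W & forall p, Q x p -> W (p, y).

Lemma star_transfer (E : set X) (V : set (set X)) a b :
  E `<=` C -> V `<=` Q @` E -> K b ->
  St (\bigcup_(G in V) G) (Q @` C) a ->
  St (\bigcup_(W in \bigcup_(x in E) F x) W) U (a, b).
Proof.
move=> EC VQE Kb [_ [[y Cy <-] [p [Qyp [_ /VQE [x Ex <-] Qxp]]]] Qya].
have [W FyW QyW] := tubeF Cy Kb.
have [W' FxW' QxW'] := tubeF (EC _ Ex) Kb.
rewrite /St; exists W; last exact: QyW.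
split; first exact: (FU Cy FyW).
exists (p, b); split; first exact: QyW.
by exists W'; [exists x | exact: QxW'].
Qed.

End StarTransfer.

Lemma tube_family (X Y : topologicalType) (A : set X) (B : set Y)
    (U : nat -> set (set (X * Y))) :
  (forall n, U n `<=` open) ->
  (forall n, closure (A `*` B) `<=` \bigcup_(W in U n) W) ->
  compact (closure B) ->
  exists (Q : nat -> X -> set X) (F : nat -> X -> set (set (X * Y))),
    forall n x, closure A x -> [/\ open (Q n x), Q n x x, finite_set (F n x),
      F n x `<=` U n &
      forall y, closure B y -> exists2 W, F n x W & forall p, Q n x p -> W (p, y)].
Proof.
move=> Uop Ucov cB.
have /choice [t ht] : forall nx : nat * X, exists t : set X * set (set (X * Y)),
    closure A nx.2 -> [/\ open t.1, t.1 nx.2, finite_set t.2, t.2 `<=` U nx.1 &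
      forall y, closure B y -> exists2 W, t.2 W & forall p, t.1 p -> W (p, y)].
  move=> [n x]; have [/= clAx|nclAx] := pselect (closure A x); last first.
    by exists (set0, set0) => /nclAx.
  have [|Q [F tube]] := @uniform_tube _ _ _ _ x (Uop n) cB.
    by move=> y clBy; apply/Ucov/closure_setX.
  by exists (Q, F).
by exists (fun n x => (t (n, x)).1), (fun n x => (t (n, x)).2) => n x /(ht (n, x)).
Qed.

Theorem theorem3p17 (X Y : topologicalType) :
  set_star_Hurewicz X -> compact [set: Y] -> rectangular_set_star_Hurewicz X Y.
Proof.
move=> hX cY A B [[a0 b0] [Aa0 Bb0]] U Uop Ucov.
have cB : compact (closure B) by apply: subclosed_compact cY _ => //; apply: closed_closure.
have [Q [F hQF]] := tube_family Uop Ucov cB.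
have Qopen n : Q n @` closure A `<=` open.
  by move=> _ [x /(hQF n) [] ? _ _ _ _ <-].
have Qcover n : closure A `<=` \bigcup_(G in Q n @` closure A) G.
  by move=> x clAx; exists (Q n x); [exists x | have [] := hQF n x clAx].
have [V [finV starV]] := hX A (ex_intro _ a0 Aa0) _ Qopen Qcover.
have /choice [E hE] : forall n, exists E,
    [/\ finite_set E, E `<=` closure A & V n `<=` Q n @` E].
  by move=> n; have [? ?] := finV n; apply: finite_subset_image.
exists (fun n => \bigcup_(x in E n) F n x); split => [n|[a b] [Aa Bb]].
  have [finE EA _] := hE n.
  split; first by apply: bigcup_finite => // x /EA /(hQF n) [].
  by move=> W [x /EA /(hQF n) [_ _ _ FU _]]; apply: FU.
have [N starN] := starV a Aa; exists N => n /starN /= star_a /=.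
have [_ EA VQE] := hE n.
by apply: (star_transfer _ _ EA VQE (subset_closure Bb) star_a) => x /(hQF n) [].
Qed.
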